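(* Let $d\ge 2$ and define on $\mathbb{N}_{\ge d-1}=\{d-1,d,d+1,\dots\}$ the operation $a\oplus b=R_d(a+1,b+1)-1$. Then $(\mathbb{N}_{\ge d-1},\oplus,\le,d-1)$ is a totally ordered unital magma, and for every finite set $A$ of hyperplanes in $\mathbb{R}^d$ with $|A|\ge d-1$, the set function $\mu_A$ (defined on all subsets of $\mathbb{R}^d$) takes values in $\mathbb{N}_{\ge d-1}$, is monotone, and is $\mathcal{H}$-subadditive with respect to $\oplus$.
   Context: For a finite set $A$ of hyperplanes in $\mathbb{R}^d$, $V(A)$ is the set of points that are the unique common point of some $d$ hyperplanes of $A$, and $\mu_A(S)=\max\{|A'| : A'\subseteq A,\ V(A')\subseteq S\}$ for $S\subseteq\mathbb{R}^d$. $R_d(a,b)$ is the hypergraph Ramsey number: the least $R$ such that every 2-colouring (colours 1, 2) of the $d$-subsets of an $R$-set contains an $a$-set with all $d$-subsets coloured 1 or a $b$-set with all $d$-subsets coloured 2. A totally ordered unital magma $(M,\oplus,\le,e)$ is a totally ordered set with a binary operation $\oplus$ closed on $M$, having neutral element $e$, and monotone in each argument. $\mu$ is monotone if $X\subseteq Y\Rightarrow\mu(X)\le\mu(Y)$, and $\mathcal{H}$-subadditive if for every finite family $h_1,\dots,h_m$ of open halfspaces, $\mu(h_1\cup\dots\cup h_m)\le\mu(h_1)\oplus(\mu(h_2)\oplus(\cdots\oplus\mu(h_m))\cdots)$. *)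

From HB Require Import structures.
From mathcomp Require Import all_boot all_order all_algebra.
From Stdlib Require Import ClassicalEpsilon.
Set Implicit Arguments. Unset Strict Implicit. Unset Printing Implicit Defensive.
Import Order.TTheory GRing.Theory Num.Theory.

Definition pbool (P : Prop) : bool :=
  if excluded_middle_informative P then true else false.

Definition ramsey_ok (d a b N : nat) : bool :=
  [forall c : {ffun {set 'I_N} -> bool},
     [exists S : {set 'I_N}, (#|S| == a) &&
        [forall T : {set 'I_N}, ((T \subset S) && (#|T| == d)) ==> c T]]
  || [exists S : {set 'I_N}, (#|S| == b) &&
        [forall T : {set 'I_N}, ((T \subset S) && (#|T| == d)) ==> ~~ c T]]].

(* R_d(a,b): the least such N (Ramsey's theorem guarantees existence;
   the default 0 is never used). *)
Definition ramsey (d a b : nat) : nat :=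
  match excluded_middle_informative (exists N, ramsey_ok d a b N) with
  | left h => ex_minn h
  | right _ => 0
  end.

Definition oplus (d : nat) (a b : nat) : nat := (ramsey d a.+1 b.+1).-1.

Definition tou_magma (M : nat -> Prop) (op : nat -> nat -> nat) (e : nat) : Prop :=
  [/\ M e,
      (forall a b, M a -> M b -> M (op a b)),
      (forall a, M a -> op e a = a /\ op a e = a)
    & (forall a a' b, M a -> M a' -> M b -> a <= a' ->
          op a b <= op a' b /\ op b a <= op b a')].

Section Geom.
Variables (R : realFieldType) (d : nat).
Local Open Scope ring_scope.

Definition dotv (a x : 'rV[R]_d) : R := \sum_(i < d) a 0 i * x 0 i.

(* a hyperplane is given by (a, b) with a != 0 : { x | a.x = b } *)
Definition on_hyp (h : 'rV[R]_d * R) (x : 'rV[R]_d) : Prop := dotv h.1 x = h.2.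

(* an open halfspace is given by (a, b) with a != 0 : { x | a.x > b } *)
Definition in_ohalf (h : 'rV[R]_d * R) (x : 'rV[R]_d) : Prop := h.2 < dotv h.1 x.

(* A finite set of hyperplanes: a family H : 'I_n -> hyperplanes,
   with nonzero normals and pairwise distinct point sets; sub-arrangements
   A' are subsets B of indices. *)
Variable n : nat.
Variable H : 'I_n -> 'rV[R]_d * R.

(* x \in V(B): x is the unique common point of some d hyperplanes of B *)
Definition inV (B : {set 'I_n}) (x : 'rV[R]_d) : Prop :=
  exists S : {set 'I_n}, [/\ S \subset B, #|S| = d &
     forall y, (forall i, i \in S -> on_hyp (H i) y) <-> y = x].

Definition Vsub (B : {set 'I_n}) (S : 'rV[R]_d -> Prop) : Prop :=
  forall x, inV B x -> S x.

Definition mu (S : 'rV[R]_d -> Prop) : nat :=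
  \max_(B : {set 'I_n} | pbool (Vsub B S)) #|B|.

End Geom.

Definition set_monotone (R : realFieldType) (d : nat)
  (m : ('rV[R]_d -> Prop) -> nat) : Prop :=
  forall X Y : 'rV[R]_d -> Prop, (forall x, X x -> Y x) -> m X <= m Y.

Fixpoint fold_r (op : nat -> nat -> nat) (x : nat) (s : seq nat) : nat :=
  match s with
  | [::] => x
  | y :: s' => op x (fold_r op y s')
  end.

Definition H_subadditive (R : realFieldType) (d : nat) (op : nat -> nat -> nat)
  (m : ('rV[R]_d -> Prop) -> nat) : Prop :=
  forall (h : 'rV[R]_d * R) (hs : seq ('rV[R]_d * R)),
    (forall g, g \in h :: hs -> (g.1 != 0)%R) ->
    m (fun x => exists2 g, g \in h :: hs & in_ohalf g x)
      <= fold_r op (m (in_ohalf h)) [seq m (in_ohalf g) | g <- hs].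

From HB Require Import structures.
From mathcomp Require Import all_boot all_order all_algebra.
From Stdlib Require Import ClassicalEpsilon.
Set Implicit Arguments. Unset Strict Implicit. Unset Printing Implicit Defensive.
Import Order.TTheory GRing.Theory Num.Theory.

(* The magma laws are properties of Ramsey numbers: monotonicity in both
   arguments, R_d(a,b) >= min(a,b), and R_d(d,b) = b (every d-subset of a
   b-set is itself a monochromatic d-set unless all are coloured 2).  The
   lower bound mu_A >= d-1 holds because fewer than d hyperplanes have no
   vertex.  For subadditivity, take A' with V(A') inside h_1 u ... u h_m and
   |A'| > mu(h_1) (+) M, where M bounds the union of the remaining halfspaces.
   Colour a d-subset of A' by whether its vertex lies in h_1; Ramsey's
   theorem yields either mu(h_1)+1 hyperplanes all of whose vertices lie in
   h_1, or M+1 hyperplanes all of whose vertices avoid h_1 and hence lie in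
   h_2 u ... u h_m, contradicting the choice of M by induction. *)

Lemma exists_subset_card (T : finType) (A : {set T}) k :
  k <= #|A| -> exists2 S : {set T}, S \subset A & #|S| = k.
Proof.
move/card_geqP=> [s [us ss sA]].
exists [set x in s]; first by apply/subsetP=> x; rewrite inE; apply: sA.
by rewrite cardsE (card_uniqP us).
Qed.

Definition arrows (T : finType) (d a b : nat) (B : {set T}) : Prop :=
  forall c : {set T} -> bool,
  (exists S : {set T}, [/\ S \subset B, #|S| = a &
     forall U : {set T}, U \subset S -> #|U| = d -> c U]) \/
  (exists S : {set T}, [/\ S \subset B, #|S| = b &
     forall U : {set T}, U \subset S -> #|U| = d -> ~~ c U]).

Section Arrows.
Variable T : finType.

Lemma arrows_mono d a b a' b' (B : {set T}) :
  a <= a' -> b <= b' -> arrows d a' b' B -> arrows d a b B.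
Proof.
have shrink k k' (S B' : {set T}) (P : {set T} -> bool) : k <= k' ->
    [/\ S \subset B', #|S| = k' &
       forall U : {set T}, U \subset S -> #|U| = d -> P U] ->
    exists S' : {set T}, [/\ S' \subset B', #|S'| = k &
       forall U : {set T}, U \subset S' -> #|U| = d -> P U].
  move=> kk' [SB cS Sc]; have [|S' S'S cS'] := @exists_subset_card T S k; first by rewrite cS.
  exists S'; split=> //; first exact: subset_trans S'S SB.
  by move=> U US; apply: Sc; apply: subset_trans US S'S.
move=> ha hb h c; case: (h c) => [[S hS]|[S hS]].
- by left; apply: shrink hS.
- by right; apply: shrink hS.
Qed.

Lemma arrows_sym d a b (B : {set T}) : arrows d a b B -> arrows d b a B.
Proof.
move=> h c; case: (h (fun U => ~~ c U)) => [[S [SB cS Sc]]|[S [SB cS Sc]]].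
- by right; exists S; split.
- by left; exists S; split=> // U US cU; rewrite -[c U]negbK Sc.
Qed.

Lemma arrows_add_vertex d (P : {set T} -> Prop) (v : T) (X Y : {set T}) :
  v \notin X -> Y \subset X ->
  (forall U : {set T}, U \subset X -> #|U| = d -> P (v |: U)) ->
  (forall U : {set T}, U \subset Y -> #|U| = d.+1 -> P U) ->
  forall U : {set T}, U \subset v |: Y -> #|U| = d.+1 -> P U.
Proof.
move=> vX YX hX hY U UvY cU; case: (boolP (v \in U)) => vU.
- rewrite -(setD1K vU); apply: hX.
    apply/subsetP=> x; rewrite !inE => /andP [xv xU].
    move: (subsetP UvY x xU); rewrite !inE (negbTE xv) /= => xY.
    exact: (subsetP YX).
  by move: cU; rewrite (cardsD1 v U) vU add1n => -[].
- apply: hY cU; apply/subsetP=> x xU.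
  move: (subsetP UvY x xU); rewrite !inE; case/orP=> // /eqP xv.
  by move: vU; rewrite -xv xU.
Qed.

(* R_{d+1}(a+1, b+1) <= R_d(R_{d+1}(a, b+1), R_{d+1}(a+1, b)) + 1: colour the
   d-subsets U of B \ v by the colour of v |: U, then extend the resulting
   monochromatic set by v. *)
Lemma arrows_step d a b N1 N2 M (B : {set T}) :
  (forall X : {set T}, N1 <= #|X| -> arrows d.+1 a b.+1 X) ->
  (forall X : {set T}, N2 <= #|X| -> arrows d.+1 a.+1 b X) ->
  (forall X : {set T}, M <= #|X| -> arrows d N1 N2 X) ->
  M < #|B| -> arrows d.+1 a.+1 b.+1 B.
Proof.
move=> h1 h2 hM hB c.
have [v vB] : exists v, v \in B by apply/card_gt0P; apply: leq_trans hB.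
have hB' : M <= #|B :\ v| by move: hB; rewrite (cardsD1 v B) vB.
have vX (X : {set T}) : X \subset B :\ v -> v \notin X.
  by move=> XB; apply/negP=> /(subsetP XB); rewrite !inE eqxx.
have XB (X : {set T}) : X \subset B :\ v -> X \subset B.
  by move=> XBv; apply: subset_trans XBv (subsetDl _ _).
have vYB (X Y : {set T}) : X \subset B :\ v -> Y \subset X -> v |: Y \subset B.
  by move=> XBv YX; rewrite subUset sub1set vB (subset_trans YX (XB _ XBv)).
have cvY (X Y : {set T}) : X \subset B :\ v -> Y \subset X -> #|v |: Y| = #|Y|.+1.
  move=> XBv YX; rewrite cardsU1; suff -> : v \notin Y by [].
  by apply: contra (vX X XBv); apply: (subsetP YX).
case: (hM _ hB' (fun U => c (v |: U))) => [[X [XBv cX Xc]]|[X [XBv cX Xc]]].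
- case: (h1 X (eq_leq (esym cX)) c) => [[Y [YX cY Yc]]|[Y [YX cY Yc]]].
  + left; exists (v |: Y); split; [exact: vYB YX | by rewrite (cvY X) ?cY |].
    exact: (arrows_add_vertex (P := fun U => c U) (vX X XBv) YX).
  + by right; exists Y; split=> //; apply: subset_trans YX (XB _ XBv).
- case: (h2 X (eq_leq (esym cX)) c) => [[Y [YX cY Yc]]|[Y [YX cY Yc]]].
  + by left; exists Y; split=> //; apply: subset_trans YX (XB _ XBv).
  + right; exists (v |: Y); split; [exact: vYB YX | by rewrite (cvY X) ?cY |].
    exact: (arrows_add_vertex (P := fun U => ~~ c U) (vX X XBv) YX).
Qed.

End Arrows.

Lemma ramsey_theorem d a b : exists N, forall (T : finType) (B : {set T}),
  N <= #|B| -> arrows d a b B.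
Proof.
elim: d a b => [|d IHd] a b.
  exists (maxn a b) => T B hB c.
  have /andP [/exists_subset_card [S SB cS] /exists_subset_card [S' S'B cS']] :
      (a <= #|B|) && (b <= #|B|) by rewrite -geq_max.
  case: (boolP (c set0)) => c0; [left; exists S | right; exists S'];
    by split=> // U _ /cards0_eq ->.
have empty_arrows k (T : finType) (B : {set T}) (P : {set T} -> bool) :
    exists S : {set T}, [/\ S \subset B, #|S| = 0 &
      forall U : {set T}, U \subset S -> #|U| = k.+1 -> P U].
  exists set0; rewrite sub0set cards0; split=> // U.
  by rewrite subset0 => /eqP ->; rewrite cards0.
elim: a b => [|a IHa] b; first by exists 0 => T B _ c; left; apply: empty_arrows.
elim: b => [|b IHb]; first by exists 0 => T B _ c; right; apply: empty_arrows.
have [N1 h1] := IHa b.+1; have [N2 h2] := IHb; have [M hM] := IHd N1 N2.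
by exists M.+1 => T B; apply: arrows_step (h1 T) (h2 T) (hM T).
Qed.

Lemma arrows_ramsey_ok d a b N : arrows d a b [set: 'I_N] -> ramsey_ok d a b N.
Proof.
move=> h; apply/forallP=> c; apply/orP.
case: (h (fun U => c U)) => [[S [_ cS Sc]]|[S [_ cS Sc]]]; [left | right];
  apply/existsP; exists S; rewrite cS eqxx /=;
  by apply/forallP=> U; apply/implyP=> /andP[US /eqP cU]; apply: Sc.
Qed.

Lemma ramsey_ok_arrows d a b N : ramsey_ok d a b N ->
  forall (T : finType) (B : {set T}), N <= #|B| -> arrows d a b B.
Proof.
move=> /forallP h T B hN c.
pose f (i : 'I_N) : T := enum_val (widen_ord hN i).
have finj : injective f by move=> i j /enum_val_inj /(congr1 val) /= /val_inj.
have fSB (S : {set 'I_N}) : f @: S \subset B.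
  by apply/subsetP=> x /imsetP [i _ ->]; apply: enum_valP.
have preim (S : {set 'I_N}) (U : {set T}) : U \subset f @: S ->
    exists2 U' : {set 'I_N}, U' \subset S & U = f @: U'.
  move=> US; exists (f @^-1: U).
    by apply/subsetP=> i; rewrite inE => /(subsetP US) /imsetP [j jS /finj ->].
  apply/setP=> x; apply/idP/imsetP => [xU | [j + ->]]; last by rewrite inE.
  by have /imsetP [j _ ex] := subsetP US x xU; exists j; rewrite ?inE -?ex.
case/orP: (h [ffun U : {set 'I_N} => c (f @: U)]) =>
  /existsP [S /andP [/eqP cS /forallP hS]]; [left | right];
  exists (f @: S); split; rewrite ?card_imset //;
  move=> U /preim [U' U'S ->]; rewrite card_imset // => cU';
  by move: (hS U'); rewrite U'S cU' eqxx ffunE.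
Qed.

Lemma ramsey_spec d a b : ramsey_ok d a b (ramsey d a b) /\
  forall N, ramsey_ok d a b N -> ramsey d a b <= N.
Proof.
rewrite /ramsey; case: excluded_middle_informative => [h|h]; first by case: ex_minnP.
exfalso; apply: h; have [N hN] := ramsey_theorem d a b.
by exists N; apply/arrows_ramsey_ok/hN; rewrite cardsT card_ord.
Qed.

Lemma arrows_ramsey d a b (T : finType) (B : {set T}) :
  ramsey d a b <= #|B| -> arrows d a b B.
Proof. by apply: ramsey_ok_arrows; case: (ramsey_spec d a b). Qed.

Lemma arrows_ramsey_ord d a b : arrows d a b [set: 'I_(ramsey d a b)].
Proof. by apply: arrows_ramsey; rewrite cardsT card_ord. Qed.

Lemma ramsey_min d a b N : arrows d a b [set: 'I_N] -> ramsey d a b <= N.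
Proof. by move/arrows_ramsey_ok; case: (ramsey_spec d a b) => _; apply. Qed.

Lemma ramsey_mono d a b a' b' :
  a <= a' -> b <= b' -> ramsey d a b <= ramsey d a' b'.
Proof. by move=> ha hb; apply/ramsey_min/(arrows_mono ha hb)/arrows_ramsey_ord. Qed.

Lemma ramsey_sym d a b : ramsey d a b = ramsey d b a.
Proof.
by apply/anti_leq; rewrite !ramsey_min //; apply/arrows_sym/arrows_ramsey_ord.
Qed.

Lemma geq_min_ramsey d a b : minn a b <= ramsey d a b.
Proof.
have [] := @arrows_ramsey_ord d a b (fun _ => true) => -[S [_ cS _]];
  have := max_card (mem S); rewrite card_ord cS => /(leq_trans _); apply;
  [exact: geq_minl | exact: geq_minr].
Qed.

Lemma ramsey_dl d b : d <= b -> ramsey d d b = b.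
Proof.
move=> db; apply/eqP; rewrite eqn_leq; apply/andP; split.
  apply: ramsey_min => c.
  case: (boolP [exists U : {set 'I_b}, (#|U| == d) && c U]).
    case/existsP=> U /andP [/eqP cU cUt]; left; exists U; split=> //.
    move=> U' U'U cU'; suff /eqP -> : U' == U by [].
    by rewrite eqEcard U'U cU' cU leqnn.
  move=> none; right; exists [set: 'I_b]; split; rewrite ?cardsT ?card_ord //.
  move=> U _ cU; apply: contra none => cUt; apply/existsP.
  by exists U; rewrite cU eqxx.
have [] := @arrows_ramsey_ord d d b (fun _ => false) => -[S [_ cS Sc]].
  by move: (Sc S (subxx S) cS).
by have := max_card (mem S); rewrite card_ord cS.
Qed.

Lemma oplus_tou_magma d : 0 < d -> tou_magma (fun a => d.-1 <= a) (oplus d) d.-1.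
Proof.
move=> d_gt0; have ed : (d.-1).+1 = d by rewrite prednK.
split=> //.
- move=> a b ha hb; rewrite /oplus -ltnS (leq_trans _ (leqSpred _)) //.
  by rewrite (leq_trans _ (geq_min_ramsey d a.+1 b.+1)) // minnSS ltnS leq_min ha.
- move=> a ha; rewrite /oplus ed.
  by split; [|rewrite ramsey_sym]; rewrite ramsey_dl // -ed ltnS.
- move=> a a' b _ _ _ aa'; rewrite /oplus.
  by split; rewrite -!subn1 leq_sub2r // ramsey_mono ?ltnS.
Qed.

Lemma pboolP (P : Prop) : reflect P (pbool P).
Proof. by rewrite /pbool; case: excluded_middle_informative => h; constructor. Qed.

Section Mu.
Variables (R : realFieldType) (d n : nat) (H : 'I_n -> 'rV[R]_d * R).

Lemma card_leq_mu (S : 'rV[R]_d -> Prop) (B : {set 'I_n}) :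
  Vsub H B S -> #|B| <= mu H S.
Proof. by move=> h; apply: (leq_bigmax_cond (P := fun B => pbool (Vsub H B S))); apply/pboolP. Qed.

Lemma mu_leq (S : 'rV[R]_d -> Prop) m :
  (forall B, Vsub H B S -> #|B| <= m) -> mu H S <= m.
Proof. by move=> h; apply/bigmax_leqP => B /pboolP; apply: h. Qed.

Lemma Vsub_small (B : {set 'I_n}) (S : 'rV[R]_d -> Prop) : #|B| < d -> Vsub H B S.
Proof.
by move=> Bd x [U [UB cU _]]; move: (subset_leq_card UB); rewrite cU leqNgt Bd.
Qed.

Lemma mu_ge_dpred (S : 'rV[R]_d -> Prop) : 0 < d -> d.-1 <= n -> d.-1 <= mu H S.
Proof.
move=> d_gt0 dn; have [|B _ cB] := @exists_subset_card _ [set: 'I_n] d.-1.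
  by rewrite cardsT card_ord.
by rewrite -cB card_leq_mu //; apply: Vsub_small; rewrite cB prednK.
Qed.

Lemma mu_monotone : set_monotone (mu H).
Proof. by move=> X Y XY; apply: mu_leq => B hB; apply: card_leq_mu => x /hB /XY. Qed.

Lemma mu_subadditive (I : eqType) (P : I -> 'rV[R]_d -> Prop) (hs : seq I) :
  forall h (B : {set 'I_n}),
  Vsub H B (fun x => exists2 g, g \in h :: hs & P g x) ->
  #|B| <= fold_r (oplus d) (mu H (P h)) [seq mu H (P g) | g <- hs].
Proof.
elim: hs => [|g hs IH] h B hB /=.
  by apply: card_leq_mu => x /hB [g']; rewrite inE => /eqP ->.
set M := fold_r _ _ _; rewrite leqNgt; apply/negP => ltMB.
have ramseyB : ramsey d (mu H (P h)).+1 M.+1 <= #|B|.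
  by move: ltMB; rewrite /oplus; case: ramsey.
have [] := arrows_ramsey ramseyB (fun U => pbool (forall x,
    (forall y, (forall i, i \in U -> on_hyp (H i) y) <-> y = x) -> P h x)).
- move=> [S [_ cS Sc]].
  suff /card_leq_mu : Vsub H S (P h) by rewrite cS ltnn.
  by move=> x [U [US cU hU]]; move/pboolP: (Sc U US cU); apply.
- move=> [S [SB cS Sc]].
  suff /IH : Vsub H S (fun x => exists2 g', g' \in g :: hs & P g' x).
    by rewrite -/M cS ltnn.
  move=> x [U [US cU hU]].
  have [|g' + Pg'x] := hB x; first by exists U; split=> //; apply: subset_trans SB.
  rewrite inE => /orP [/eqP eg'|]; last by exists g'.
  case/negP: (Sc U US cU); apply/pboolP => x' hx'.
  have -> : x' = x by apply/(hU x').1/(hx' x').2.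
  by rewrite -eg'.
Qed.

End Mu.

Theorem mainTheorem7 (R : realFieldType) (d : nat) (hd : 2 <= d) :
  tou_magma (fun a => d.-1 <= a) (oplus d) d.-1 /\
  forall (n : nat) (H : 'I_n -> 'rV[R]_d * R),
    (forall i, ((H i).1 != 0)%R) ->
    (forall i j, i != j ->
       ~ (forall x, on_hyp (H i) x <-> on_hyp (H j) x)) ->
    d.-1 <= n ->
    [/\ (forall S : 'rV[R]_d -> Prop, d.-1 <= mu H S),
        set_monotone (mu H)
      & H_subadditive (oplus d) (mu H)].
Proof.
have d_gt0 : 0 < d by apply: leq_trans hd.
split; first exact: oplus_tou_magma.
move=> n H _ _ dn; split; [by move=> S; apply: mu_ge_dpred | exact: mu_monotone |].
move=> h hs _; apply: mu_leq => B hB.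
exact: mu_subadditive.
Qed.
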